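(* Let $(R,+,\cdot)$ be a finite simple additively idempotent semiring with $|R|>2$ for which there exists a finite idempotent sub-irreducible $R$-semimodule, and suppose its greatest element $\infty_R$ is neither left nor right absorbing. Then $(R,+,\cdot)$ has a zero, i.e., $(R,+)$ has a neutral element which is multiplicatively absorbing.
   Context: A semiring is a nonempty set with a commutative semigroup operation $+$ and a semigroup operation $\cdot$ satisfying both distributive laws; simple if its only congruences are the identity and the full relation; additively idempotent if $r+r=r$, with order $x\le y:\Leftrightarrow x+y=y$ and greatest element $\infty_R=\sum_{r\in R}r$. An element $r$ is right absorbing if $sr=r$ for all $s$, left absorbing if $rs=r$ for all $s$, absorbing if both. An $R$-semimodule is a commutative semigroup $(M,+)$ with an action $R\times M\to M$ satisfying $r(sx)=(rs)x$, $(r+s)x=rx+sx$, $r(x+y)=rx+ry$; idempotent if $x+x=x$. A subsemimodule is a subsemigroup closed under the action. $M$ is quasitrivial if $rx=sx$ for all $r,s,x$; id-quasitrivial if $rx=x$ for all $r,x$; sub-irreducible if not quasitrivial and all proper subsemimodules are id-quasitrivial. *)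

From mathcomp Require Import all_boot.
Set Implicit Arguments. Unset Strict Implicit. Unset Printing Implicit Defensive.

Definition is_semiring (R : Type) (add mul : R -> R -> R) : Prop :=
  (forall x y z, add x (add y z) = add (add x y) z) /\
  (forall x y, add x y = add y x) /\
  (forall x y z, mul x (mul y z) = mul (mul x y) z) /\
  (forall x y z, mul x (add y z) = add (mul x y) (mul x z)) /\
  (forall x y z, mul (add x y) z = add (mul x z) (mul y z)).

Definition is_congruence (R : Type) (add mul : R -> R -> R) (c : R -> R -> Prop) : Prop :=
  (forall x, c x x) /\ (forall x y, c x y -> c y x) /\
  (forall x y z, c x y -> c y z -> c x z) /\
  (forall x y x' y', c x x' -> c y y' -> c (add x y) (add x' y')) /\
  (forall x y x' y', c x x' -> c y y' -> c (mul x y) (mul x' y')).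

Definition simple_semiring (R : Type) (add mul : R -> R -> R) : Prop :=
  forall c, is_congruence add mul c ->
    (forall x y, c x y <-> x = y) \/ (forall x y, c x y).

Definition add_idempotent (R : Type) (add : R -> R -> R) : Prop :=
  forall x, add x x = x.

Definition add_le (R : Type) (add : R -> R -> R) (x y : R) : Prop := add x y = y.
Definition greatest (R : Type) (add : R -> R -> R) (t : R) : Prop :=
  forall x, add_le add x t.

Definition right_absorbing (R : Type) (mul : R -> R -> R) (r : R) : Prop :=
  forall s, mul s r = r.
Definition left_absorbing (R : Type) (mul : R -> R -> R) (r : R) : Prop :=
  forall s, mul r s = r.
Definition absorbing (R : Type) (mul : R -> R -> R) (r : R) : Prop :=
  left_absorbing mul r /\ right_absorbing mul r.

Definition is_semimodule (R M : Type) (add mul : R -> R -> R)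
    (madd : M -> M -> M) (act : R -> M -> M) : Prop :=
  (forall x y z, madd x (madd y z) = madd (madd x y) z) /\
  (forall x y, madd x y = madd y x) /\
  (forall r s x, act r (act s x) = act (mul r s) x) /\
  (forall r s x, act (add r s) x = madd (act r x) (act s x)) /\
  (forall r x y, act r (madd x y) = madd (act r x) (act r y)).

Definition subsemimodule (R M : Type) (madd : M -> M -> M) (act : R -> M -> M)
    (S : M -> Prop) : Prop :=
  (forall x y, S x -> S y -> S (madd x y)) /\ (forall r x, S x -> S (act r x)).

Definition quasitrivial (R M : Type) (act : R -> M -> M) (S : M -> Prop) : Prop :=
  forall r s x, S x -> act r x = act s x.
Definition id_quasitrivial (R M : Type) (act : R -> M -> M) (S : M -> Prop) : Prop :=
  forall r x, S x -> act r x = x.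

Definition sub_irreducible (R M : Type) (madd : M -> M -> M) (act : R -> M -> M) : Prop :=
  ~ quasitrivial act (fun _ => True) /\
  (forall S : M -> Prop, subsemimodule madd act S -> (exists x, ~ S x) ->
     id_quasitrivial act S).

From mathcomp Require Import all_boot.
From Stdlib Require Import Classical.

Set Implicit Arguments.
Unset Strict Implicit.
Unset Printing Implicit Defensive.

(* The action of R on M is faithful, since its kernel congruence cannot be
   full when M is not quasitrivial. Sub-irreducibility splits M into
   generators x (with R x = M) and fixed points; if M had no fixed point, all
   elements would be generators, and [infty x] would be the top of M for every
   x, forcing [infty] to be left absorbing. So there is a fixed point, and by
   finiteness of M some r maps all of M into fixed points. Such elements form
   an ideal avoiding [infty] (otherwise [infty] would be right absorbing), and
   simplicity makes the Bourne congruence of this ideal the identity, which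
   turns every element of the ideal into a zero. *)

Section BourneCongruence.

Variables (R : Type) (add mul : R -> R -> R).
Hypothesis HR : is_semiring add mul.

Let addA := proj1 HR.
Let addC := proj1 (proj2 HR).
Let mulDr := proj1 (proj2 (proj2 (proj2 HR))).
Let mulDl := proj2 (proj2 (proj2 (proj2 HR))).

Definition ideal (I : R -> Prop) : Prop :=
  (forall i j, I i -> I j -> I (add i j)) /\
  (forall s i, I i -> I (mul s i)) /\
  (forall s i, I i -> I (mul i s)).

Definition bourne (I : R -> Prop) (r s : R) : Prop :=
  exists i, I i /\ add r i = add s i.

Section Ideal.

Variable I : R -> Prop.
Hypothesis HI : ideal I.

Lemma bourne_trans x y z : bourne I x y -> bourne I y z -> bourne I x z.
Proof.
move=> [i [Ii exy]] [j [Ij eyz]]; exists (add i j); split; first exact: (proj1 HI).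
by rewrite addA exy -addA (addC i j) addA eyz -addA (addC j i).
Qed.

Lemma bourne_congruence : (exists i, I i) -> is_congruence add mul (bourne I).
Proof.
have [Iadd [Imull Imulr]] := HI.
have addACA : forall a b c d, add (add a b) (add c d) = add (add a c) (add b d).
  by move=> a b c d; rewrite -!addA (addA b) (addC b c) -addA.
move=> [i0 Ii0]; split; first by move=> x; exists i0.
split; first by move=> x y [i [Ii e]]; exists i.
split; first exact: bourne_trans.
split=> x y x' y' [i [Ii ex]] [j [Ij ey]].
- exists (add i j); split; first exact: Iadd.
  by rewrite [LHS]addACA [RHS]addACA ex ey.
- apply: (@bourne_trans _ (mul x' y)).
  + by exists (mul i y); split; [exact: Imulr | rewrite -!mulDl ex].
  + by exists (mul x' j); split; [exact: Imull | rewrite -!mulDr ey].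
Qed.

Lemma ideal_zero (inf : R) :
  simple_semiring add mul -> add_idempotent add -> greatest add inf ->
  ~ I inf -> forall i, I i -> (forall x, add i x = x) /\ absorbing mul i.
Proof.
move=> Hsimp Hid Hgr nIinf i Ii.
have [Iadd [Imull Imulr]] := HI.
case: (Hsimp _ (bourne_congruence (ex_intro _ i Ii))) => [Hidc | Hfull].
- have add_ideal : forall r j, I j -> add r j = r.
    by move=> r j Ij; apply/Hidc; exists j; split; rewrite // -addA Hid.
  split; first by move=> x; rewrite addC add_ideal.
  split=> s.
  + by rewrite -{1}(add_ideal (mul i s) i Ii) addC add_ideal //; exact: Imulr.
  + by rewrite -{1}(add_ideal (mul s i) i Ii) addC add_ideal //; exact: Imull.
- have [j [Ij e]] := Hfull i inf.
  case: nIinf; rewrite -(Hgr j) addC -e; exact: Iadd.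
Qed.

End Ideal.

End BourneCongruence.

Section SubIrreducible.

Variables (R M : Type) (add mul : R -> R -> R).
Variables (madd : M -> M -> M) (act : R -> M -> M).
Hypothesis HM : is_semimodule add mul madd act.
Hypothesis Hsimp : simple_semiring add mul.
Hypothesis Hirr : sub_irreducible madd act.

Let maddC := proj1 (proj2 HM).
Let actM := proj1 (proj2 (proj2 HM)).
Let actDl := proj1 (proj2 (proj2 (proj2 HM))).
Let actDr := proj2 (proj2 (proj2 (proj2 HM))).
Let not_quasitrivial := proj1 Hirr.
Let proper_id_quasitrivial := proj2 Hirr.

Lemma act_faithful r s : (forall x, act r x = act s x) -> r = s.
Proof.
have Hker : is_congruence add mul (fun r s => forall x, act r x = act s x).
  split; first by [].
  split; first by move=> a b e x; rewrite e.
  split; first by move=> a b c e1 e2 x; rewrite e1 e2.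
  split=> a b a' b' ea eb x; first by rewrite !actDl ea eb.
  by rewrite -!actM eb ea.
case: (Hsimp Hker) => [Hid | Hfull]; first exact: (proj1 (Hid r s)).
by case: not_quasitrivial => r' s' x _; exact: Hfull.
Qed.

Definition generates (x : M) : Prop := forall y, exists r, act r x = y.

Definition image_fixed (i : R) : Prop := forall x t, act t (act i x) = act i x.

Lemma orbit_subsemimodule x : subsemimodule madd act (fun y => exists r, act r x = y).
Proof.
split.
- by move=> _ _ [r <-] [s <-]; exists (add r s); rewrite actDl.
- by move=> r _ [s <-]; exists (mul r s); rewrite actM.
Qed.

Lemma orbit_fixed_of_not_generates x :
  ~ generates x -> forall r s, act r (act s x) = act s x.
Proof.
move=> nx r s.
have [y ny] : exists y, ~ exists r, act r x = y by apply: not_all_ex_not.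
apply: (proper_id_quasitrivial (@orbit_subsemimodule x) (ex_intro _ y ny)).
by exists s.
Qed.

Lemma right_absorbing_of_image_fixed i : image_fixed i -> right_absorbing mul i.
Proof. by move=> Ii s; apply: act_faithful => x; rewrite -actM Ii. Qed.

Lemma image_fixed_of_no_generator : ~ (exists x, generates x) -> forall i, image_fixed i.
Proof.
by move=> nogen i x t; apply: orbit_fixed_of_not_generates => gx; apply: nogen; exists x.
Qed.

(* The sum of two non-generators cannot generate: otherwise every element,
   being a multiple of the sum, would be fixed by the whole of R. *)
Lemma non_generators_subsemimodule : subsemimodule madd act (fun x => ~ generates x).
Proof.
split.
- move=> x y nx ny gxy; apply: not_quasitrivial => r s z _.
  have [t <-] := gxy z.
  by rewrite !actDr !(orbit_fixed_of_not_generates nx) !(orbit_fixed_of_not_generates ny).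
- move=> r x nx g; apply: nx => z; have [s <-] := g z.
  by exists (mul s r); rewrite actM.
Qed.

Lemma generates_or_fixed :
  (exists x, generates x) -> forall x, generates x \/ forall r, act r x = x.
Proof.
move=> [x0 gx0] x; case: (classic (generates x)) => [gx | nx]; [by left | right].
have nonproper : exists x, ~ ~ generates x by exists x0.
by move=> r; apply: (proper_id_quasitrivial non_generators_subsemimodule nonproper).
Qed.

Lemma act_greatest_of_generates inf x :
  greatest add inf -> generates x -> forall m, madd m (act inf x) = act inf x.
Proof. by move=> Hgr gx m; have [r <-] := gx m; rewrite -actDl Hgr. Qed.

Lemma left_absorbing_of_all_generate inf :
  greatest add inf -> (forall x, generates x) -> left_absorbing mul inf.
Proof.
move=> Hgr allgen r; apply: act_faithful => x; rewrite -actM.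
have top_rx := act_greatest_of_generates Hgr (allgen (act r x)) (act inf x).
have top_x := act_greatest_of_generates Hgr (allgen x) (act inf (act r x)).
by rewrite -top_rx maddC top_x.
Qed.

Lemma image_fixed_ideal : ideal add mul image_fixed.
Proof.
split; first by move=> i j Ii Ij x t; rewrite !actDl actDr Ii Ij.
by split=> s i Ii x t; rewrite -actM ?Ii.
Qed.

End SubIrreducible.

(* Starting from [r] whose image on a list [l] is fixed, a new element [x] is
   either sent by [r] to a fixed point already, or [r x] is a generator and
   some [t] sends it to the fixed point [f]; then [t * r] works for [x :: l]. *)
Lemma exists_image_fixed (R : Type) (M : finType) (add mul : R -> R -> R)
    (madd : M -> M -> M) (act : R -> M -> M) (r0 : R) :
  is_semimodule add mul madd act ->
  (forall x, generates act x \/ forall r, act r x = x) ->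
  (exists f, forall r, act r f = f) ->
  exists i, image_fixed act i.
Proof.
move=> [_ [_ [actM _]]] dich [f fixf].
suff [i Hi] : exists i, forall x, x \in enum M -> forall t, act t (act i x) = act i x.
  by exists i => x; apply: Hi; rewrite mem_enum.
elim: (enum M) => [|x l [r Hr]]; first by exists r0.
case: (dich (act r x)) => [gx | fixx].
- have [t Ht] := gx f; exists (mul t r) => y; rewrite inE => /orP [/eqP -> | yl] t';
    rewrite -!actM.
  + by rewrite Ht fixf.
  + by rewrite !(Hr y yl).
- by exists r => y; rewrite inE => /orP [/eqP -> | /Hr].
Qed.

Theorem proposition2p24 (R : finType) (add mul : R -> R -> R) (inf : R) :
  is_semiring add mul ->
  simple_semiring add mul ->
  add_idempotent add ->
  2 < #|R| ->
  (exists (M : finType) (madd : M -> M -> M) (act : R -> M -> M),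
      is_semimodule add mul madd act /\ add_idempotent madd /\
      sub_irreducible madd act) ->
  greatest add inf ->
  ~ left_absorbing mul inf ->
  ~ right_absorbing mul inf ->
  exists z : R, (forall x, add z x = x) /\ absorbing mul z.
Proof.
move=> HR Hsimp Hid _ [M [madd [act [HM [_ Hirr]]]]] Hgr Hnl Hnr.
have not_image_fixed_inf : ~ image_fixed act inf.
  by move/(right_absorbing_of_image_fixed HM Hsimp Hirr).
have some_gen : exists x, generates act x.
  apply: NNPP => nogen; apply: not_image_fixed_inf.
  exact: (image_fixed_of_no_generator HM Hirr).
have dich := generates_or_fixed HM Hirr some_gen.
have some_fixed : exists f, forall r, act r f = f.
  apply: NNPP => nofix; apply: Hnl; apply: (left_absorbing_of_all_generate HM Hsimp Hirr Hgr).
  by move=> x; case: (dich x) => // fixx; case: nofix; exists x.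
have [i Ii] := exists_image_fixed inf HM dich some_fixed.
exists i; exact: (ideal_zero HR (image_fixed_ideal HM) Hsimp Hid Hgr not_image_fixed_inf Ii).
Qed.
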